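(* Let $M\ge 2$ and define $$\mathcal{B}=\Big\{(n_1,\dots,n_M,P_1,\dots,P_M)\in\mathbb{R}_{>0}^{2M}\;:\;0.5>\varepsilon_1(n_1,P_1)>\varepsilon_M(n_1,\dots,n_M,P_1,\dots,P_M)>Q\big(\sqrt{2B\ln 2}/3\big)\Big\}.$$ Fix $(n_1,\dots,n_M,P_1,\dots,P_M)\in\mathbb{R}_{>0}^{2M}$. Then on any interval of values $a>0$ for which $(an_1,n_2,\dots,n_M,P_1/a,P_2,\dots,P_M)\in\mathcal{B}$, both functions $a\mapsto\varepsilon_1(an_1,P_1/a)$ and $a\mapsto\varepsilon_M(an_1,n_2,\dots,n_M,P_1/a,P_2,\dots,P_M)$ are non-increasing in $a$.
   Context: Fix $B>0$. Let $Q(x)=\frac{1}{\sqrt{2\pi}}\int_x^\infty e^{-t^2/2}\,dt$. For $m\ge 1$, blocklengths $\vec n_m=(n_1,\dots,n_m)$ with $n_i>0$ and powers $\vec P_m=(P_1,\dots,P_m)$ with $P_i\ge 0$ (not all zero), define $$\varepsilon_m(\vec n_m,\vec P_m)=Q\!\left(\frac{\sum_{i=1}^m n_i\ln(1+P_i)-B\ln 2}{\sqrt{\sum_{i=1}^m \frac{n_iP_i(P_i+2)}{(P_i+1)^2}}}\right),$$ written also as $\varepsilon_m(n_1,\dots,n_m,P_1,\dots,P_m)$. *)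

From Stdlib Require Import Reals Lra ClassicalEpsilon.
Open Scope R_scope.

Definition gauss (t : R) : R := / sqrt (2 * PI) * exp (- (t ^ 2) / 2).

Definition is_tail_int (f : R -> R) (x l : R) : Prop :=
  forall eps, 0 < eps -> exists Y, forall y, Y <= y ->
    exists pr : Riemann_integrable f x y, Rabs (RiemannInt pr - l) < eps.

(* Q(x) = (1/sqrt(2 pi)) int_x^oo exp(-t^2/2) dt  (the limit exists and is unique). *)
Definition Qfun (x : R) : R := epsilon (inhabits 0) (is_tail_int gauss x).

Fixpoint sumR (m : nat) (f : nat -> R) : R :=
  match m with
  | O => 0
  | S k => sumR k f + f k
  end.

(* eps_m(n_1..n_m, P_1..P_m), with n_i = n (i-1), P_i = P (i-1). *)
Definition epsm (B : R) (m : nat) (n P : nat -> R) : R :=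
  Qfun ((sumR m (fun i => n i * ln (1 + P i)) - B * ln 2) /
        sqrt (sumR m (fun i => n i * P i * (P i + 2) / (P i + 1) ^ 2))).

Definition inBset (B : R) (M : nat) (n P : nat -> R) : Prop :=
  (forall i, (i < M)%nat -> 0 < n i /\ 0 < P i) /\
  0.5 > epsm B 1 n P /\
  epsm B 1 n P > epsm B M n P /\
  epsm B M n P > Qfun (sqrt (2 * B * ln 2) / 3).

Definition scaleN (a : R) (n : nat -> R) : nat -> R :=
  fun i => if Nat.eqb i 0 then a * n i else n i.
Definition scaleP (a : R) (P : nat -> R) : nat -> R :=
  fun i => if Nat.eqb i 0 then P i / a else P i.

(* Since [Q] is decreasing, it suffices that the argument
     z(a) = (A + a n1 ln(1 + P1/a) - c) / sqrt(W + V(a)),   c = B ln 2,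
   of [Q] is nondecreasing, where [V(a)] is the dispersion of the first block and [A], [W] collect
   the other blocks.  With [D] the numerator, [f] the first-block capacity and [v = V(a)],
   z'(a) has the sign of [f' (W + v) - D v' / 2].  Here [f'], [v' > 0]; if [D > 0], the bounds
   [z < sqrt(2c)/3] (from eps_M > Q(sqrt(2 B ln 2)/3)) and [c < f] (from eps_1 < 1/2 = Q(0)) give
   [D^2 < 2 f (W + v) / 9], and the claim reduces to [f v'^2 <= 18 f'^2 v], a one-variable
   inequality in [P1/a] that follows from [ln(1 + x) >= 2x / (2 + x)].
   The two facts about [Q] come from [Q(x) = 1/2 - int_0^x gauss], the value of the Gaussian
   integral being taken from MathComp-Analysis. *)

From Stdlib Require Import Reals Lra Lia ClassicalEpsilon.
From mathcomp Require all_boot all_order all_algebra all_classical all_reals all_analysis.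
From mathcomp Require Rstruct Rstruct_topology.
From Coquelicot Require Import Coquelicot.
Open Scope R_scope.

Module GaussIntegral.
Import all_boot all_order all_algebra all_classical all_reals all_analysis.
Import Rstruct Rstruct_topology.
Import Order.TTheory GRing.Theory Num.Theory numFieldNormedType.Exports.

Lemma derivable_pt_lim_derive1 (f : R^o -> R^o) (x : R) :
  derivable f x 1 -> derivable_pt_lim f x (derive1 f x).
Proof.
move=> df; rewrite derive1E.
move/cvg_ex: df => [l Hl].
have -> : 'D_1 f x = l by apply: cvg_lim.
move=> eps /RltP eps0.
move/cvgrPdist_lt : Hl => /(_ eps eps0).
rewrite /dnbhs /within /= => /nbhs_ballP [d /= d0 Hd].
exists (mkposreal d ltac:(apply/RltP; exact d0)) => h /eqP h0 /RltP hd.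
have hb : ball (0 : R^o) d h by rewrite /ball /= sub0r normrN -RabsE.
move: (Hd h hb h0); rewrite /GRing.scale /= mulr1 (addrC h x) distrC mulrC.
by move/RltP; rewrite RabsE.
Qed.

(* Both arctangents have derivative [1 / (1 + x^2)] and vanish at [0], so they agree at [1]. *)
Lemma PI_eq_pi : PI = pi.
Proof.
have datan x : derivable_pt_lim atan x (/ (1 + x ^ 2))%coqR.
  have dA : derivable (atan : R^o -> R^o) x 1 by exact: derivable_atan.
  have := @derivable_pt_lim_derive1 (atan : R^o -> R^o) x dA.
  by rewrite derive1_atan RinvE RpowE.
pose h x := (Ratan.atan x - atan x)%coqR.
have dh c : (0 <= c <= 1)%coqR -> derivable_pt_lim h c 0%coqR.
  move=> _; rewrite -(Rminus_diag (/ (1 + c ^ 2))%coqR).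
  exact: derivable_pt_lim_minus (derivable_pt_lim_atan c) (datan c).
have [c [Hc _]] := MVT_cor2 h (fun=> 0%coqR) 0 1 Rlt_0_1 dh.
have atan1R : atan 1 = (pi / 4)%coqR by rewrite atan1 RdivE IZRposE INRE.
have atan0R : atan 0 = 0%coqR by exact: atan0.
move: Hc; rewrite /h Ratan.atan_0 atan0R Ratan.atan_1 atan1R.
lra.
Qed.

Local Open Scope classical_set_scope.
Local Open Scope ring_scope.

Definition gauss_int0 (z : R) : R := gauss_integral_proof.integral0_gauss z.

Lemma gauss_int0_cvg_pinfty (eps : R) : (0 < eps)%coqR ->
  exists Z : R, forall z, (Z <= z)%coqR -> (Rabs (gauss_int0 z - sqrt PI / 2) < eps)%coqR.
Proof.
have cvgI : @gauss_integral_proof.integral0_gauss R x @[x --> +oo] --> Num.sqrt pi / 2.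
  have : Num.sqrt (@gauss_integral_proof.integral0_gauss R x ^+ 2) @[x --> +oo]
      --> Num.sqrt (pi / 4).
    apply: continuous_cvg => //;
      [exact: sqrt_continuous|exact: gauss_integral_proof.cvg_integral0_gauss_sqr].
  rewrite sqrtrM ?pi_ge0// sqrtrV// (_ : 4 = 2 ^+ 2); last by rewrite expr2 -natrM.
  rewrite sqrtr_sqr ger0_norm//.
  rewrite (_ : (fun _ => Num.sqrt _) = gauss_integral_proof.integral0_gauss)//.
  apply/funext => r; rewrite sqrtr_sqr// ger0_norm//.
  exact: gauss_integral_proof.integral0_gauss_ge0.
move=> /RltP eps0; rewrite PI_eq_pi RsqrtE.
move/cvgrPdist_lt : cvgI => /(_ eps eps0) [M [_ HM]].
exists (M + 1)%coqR => z /RleP zM.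
apply/RltP; rewrite RabsE distrC; apply: HM.
by apply: lt_le_trans zM; rewrite ltrDl.
Qed.

Lemma gauss_int0_cvg_0 (eps : R) : (0 < eps)%coqR ->
  exists d : R, (0 < d)%coqR /\ forall z, (Rabs z < d)%coqR -> (Rabs (gauss_int0 z) < eps)%coqR.
Proof.
have cvgI : (gauss_int0 : R^o -> R^o) x @[x --> (0:R^o)] --> (0:R^o).
  apply: (@parameterized_integral_cvg_left R 0 1 gauss_fun) => //.
  apply: continuous_compact_integrable => //; first exact: segment_compact.
  by apply: continuous_subspaceT; exact: continuous_gauss_fun.
move=> /RltP eps0.
move/cvgrPdist_lt : cvgI => /(_ eps eps0) /nbhs_ballP [d /= d0 Hd].
exists d; split; first by apply/RltP.
move=> z /RltP zd; apply/RltP.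
have := Hd z; rewrite /ball /= sub0r normrN -RabsE => /(_ zd).
by rewrite sub0r normrN RabsE.
Qed.

Lemma gauss_int0_derive (z : R) : (0 < z)%coqR ->
  derivable_pt_lim gauss_int0 z (exp (- (z * z))).
Proof.
move=> /RltP z0.
have [dG dGz] : (derivable (gauss_int0 : R^o -> R^o) z 1 /\
    derive1 (gauss_int0 : R^o -> R^o) z = gauss_fun z)%type.
  apply: (@continuous_FTC1_closed R gauss_fun 0 z (z + 1)).
  - by rewrite ltrDl.
  - apply: continuous_compact_integrable => //; first exact: segment_compact.
    by apply: continuous_subspaceT; exact: continuous_gauss_fun.
  - exact: z0.
  - exact: continuous_gauss_fun.
have := @derivable_pt_lim_derive1 gauss_int0 z dG.
by rewrite dGz /gauss_fun RexpE expr2.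
Qed.
End GaussIntegral.

Lemma gauss_pos t : 0 < gauss t.
Proof.
  unfold gauss. apply Rmult_lt_0_compat; [|apply exp_pos].
  apply Rinv_0_lt_compat, sqrt_lt_R0. generalize PI_RGT_0; lra.
Qed.

Lemma gauss_le_1 t : gauss t <= 1.
Proof.
  unfold gauss.
  assert (Hs : 1 < sqrt (2 * PI)).
  { rewrite <- sqrt_1. apply sqrt_lt_1; generalize PI_RGT_0 PI2_1; intros; lra. }
  assert (He : exp (- t ^ 2 / 2) <= 1).
  { rewrite <- exp_0. destruct (Rle_lt_or_eq_dec 0 (t ^ 2) (pow2_ge_0 t)) as [Ht|Ht].
    - left. apply exp_increasing. lra.
    - rewrite <- Ht. right. f_equal. field. }
  assert (Hi : 0 < / sqrt (2 * PI) < 1).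
  { split; [apply Rinv_0_lt_compat; lra|]. rewrite <- Rinv_1. apply Rinv_lt_contravar; lra. }
  assert (0 < exp (- t ^ 2 / 2)) by apply exp_pos.
  nra.
Qed.

Lemma gauss_continuous t : continuous gauss t.
Proof. apply (@ex_derive_continuous R_AbsRing R_NormedModule). unfold gauss. auto_derive. easy. Qed.

Lemma ex_RInt_gauss a b : ex_RInt gauss a b.
Proof. apply (@ex_RInt_continuous R_CompleteNormedModule). intros t _. apply gauss_continuous. Qed.

Definition Phi (y : R) : R := RInt gauss 0 y.

Lemma RInt_gauss x y : RInt gauss x y = Phi y - Phi x.
Proof.
  unfold Phi. rewrite <- (RInt_Chasles gauss 0 x y) by apply ex_RInt_gauss.
  unfold plus; simpl. unfold Rminus.
  rewrite (Rplus_comm (RInt gauss 0 x)), Rplus_assoc, Rplus_opp_r, Rplus_0_r. reflexivity.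
Qed.

Lemma Phi_0 : Phi 0 = 0.
Proof. exact (RInt_point (V := R_CompleteNormedModule) 0 gauss). Qed.

Lemma Phi_nondecreasing x y : x <= y -> Phi x <= Phi y.
Proof.
  intros Hxy. assert (H : 0 <= RInt gauss x y).
  { apply RInt_ge_0; [exact Hxy|apply ex_RInt_gauss|intros t _; left; apply gauss_pos]. }
  rewrite RInt_gauss in H. lra.
Qed.

Lemma Phi_abs_le e : 0 <= e -> Rabs (Phi e) <= e.
Proof.
  intros He. replace e with ((e - 0) * 1) at 2 by ring.
  apply abs_RInt_le_const; [exact He|apply ex_RInt_gauss|].
  intros t _. rewrite Rabs_pos_eq; [apply gauss_le_1|left; apply gauss_pos].
Qed.

(* [erf (y / sqrt 2) / 2], i.e. [Phi] after the substitution [t = sqrt 2 * s] *)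
Definition Phi_erf (y : R) : R := / sqrt PI * GaussIntegral.gauss_int0 (y / sqrt 2).

Lemma Phi_erf_derive y : 0 < y -> is_derive Phi_erf y (gauss y).
Proof.
  intros Hy. apply is_derive_Reals. unfold Phi_erf, gauss.
  assert (Hs2 : 0 < sqrt 2) by (apply sqrt_lt_R0; lra).
  assert (HsPI : 0 < sqrt PI) by apply sqrt_lt_R0, PI_RGT_0.
  assert (Hscale : derivable_pt_lim (fun y => y / sqrt 2) y (/ sqrt 2)).
  { apply is_derive_Reals. auto_derive; [easy|field; lra]. }
  assert (HG := GaussIntegral.gauss_int0_derive (y / sqrt 2) ltac:(apply Rdiv_lt_0_compat; lra)).
  assert (H := derivable_pt_lim_scal _ (/ sqrt PI) y _
                 (derivable_pt_lim_comp _ _ y _ _ Hscale HG)).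
  replace (/ sqrt (2 * PI) * exp (- y ^ 2 / 2)) with
    (/ sqrt PI * (exp (- (y / sqrt 2 * (y / sqrt 2))) * / sqrt 2)); [exact H|].
  rewrite sqrt_mult by (generalize PI_RGT_0; lra).
  replace (- (y / sqrt 2 * (y / sqrt 2))) with (- y ^ 2 / 2); [field; lra|].
  replace (y / sqrt 2 * (y / sqrt 2)) with (y * y / (sqrt 2 * sqrt 2)) by (field; lra).
  rewrite sqrt_sqrt by lra. field.
Qed.

Lemma eq_0_of_abs_lt x : (forall eta, 0 < eta -> Rabs x < eta) -> x = 0.
Proof.
  intros H. destruct (Req_dec x 0) as [|Hx]; [assumption|].
  specialize (H _ (Rabs_pos_lt x Hx)). lra.
Qed.

Lemma Phi_eq_erf y : 0 < y -> Phi y = Phi_erf y.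
Proof.
  intros Hy.
  assert (Hshift : forall e, 0 < e <= y -> Phi y - Phi_erf y = Phi e - Phi_erf e).
  { intros e He.
    assert (H : is_RInt gauss e y (minus (Phi_erf y) (Phi_erf e))).
    { apply (@is_RInt_derive R_CompleteNormedModule); rewrite Rmin_left, Rmax_right by lra; intros t Ht.
      - apply Phi_erf_derive. lra.
      - apply gauss_continuous. }
    apply (@is_RInt_unique R_CompleteNormedModule) in H. rewrite RInt_gauss in H.
    unfold minus, plus, opp in H. simpl in H. lra. }
  apply Rminus_diag_uniq, eq_0_of_abs_lt. intros eta Heta.
  assert (HsPI : 0 < sqrt PI) by apply sqrt_lt_R0, PI_RGT_0.
  assert (Hs2 : 1 <= sqrt 2) by (rewrite <- sqrt_1; apply sqrt_le_1; lra).
  destruct (GaussIntegral.gauss_int0_cvg_0 (eta / 2 * sqrt PI)) as [d [Hd HG]].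
  { apply Rmult_lt_0_compat; lra. }
  set (e := Rmin (Rmin y (eta / 2)) (d / 2)).
  assert (He : 0 < e) by (unfold e; repeat apply Rmin_pos; lra).
  assert (Hey : e <= y) by (unfold e; eapply Rle_trans; [apply Rmin_l|apply Rmin_l]).
  assert (Heeta : e <= eta / 2) by (unfold e; eapply Rle_trans; [apply Rmin_l|apply Rmin_r]).
  assert (Hed : e <= d / 2) by (unfold e; apply Rmin_r).
  rewrite (Hshift e (conj He Hey)).
  assert (HPhi := Phi_abs_le e (Rlt_le _ _ He)).
  assert (Hes : 0 < e / sqrt 2 <= e).
  { split; [apply Rdiv_lt_0_compat; lra|].
    apply Rmult_le_reg_r with (sqrt 2); [lra|]. unfold Rdiv.
    rewrite Rmult_assoc, Rinv_l by lra. nra. }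
  assert (HGe := HG (e / sqrt 2) ltac:(rewrite Rabs_pos_eq; lra)).
  assert (Herf : Rabs (Phi_erf e) < eta / 2).
  { unfold Phi_erf. rewrite Rabs_mult, Rabs_inv, (Rabs_pos_eq (sqrt PI)) by lra.
    apply Rmult_lt_reg_l with (sqrt PI); [lra|].
    rewrite <- Rmult_assoc, Rinv_r by lra. lra. }
  unfold Rminus. eapply Rle_lt_trans; [apply Rabs_triang|]. rewrite Rabs_Ropp. lra.
Qed.

Lemma Phi_cvg_half eps : 0 < eps -> exists Y, forall y, Y <= y -> Rabs (Phi y - 1 / 2) < eps.
Proof.
  intros Heps.
  assert (HsPI : 0 < sqrt PI) by apply sqrt_lt_R0, PI_RGT_0.
  assert (Hs2 : 0 < sqrt 2) by (apply sqrt_lt_R0; lra).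
  destruct (GaussIntegral.gauss_int0_cvg_pinfty (eps * sqrt PI)) as [Z HZ].
  { apply Rmult_lt_0_compat; lra. }
  exists (Rmax 1 (Z * sqrt 2)). intros y Hy.
  assert (Hy1 : 1 <= y) by (eapply Rle_trans; [apply Rmax_l|exact Hy]).
  assert (HyZ : Z * sqrt 2 <= y) by (eapply Rle_trans; [apply Rmax_r|exact Hy]).
  assert (HZy : Z <= y / sqrt 2).
  { apply Rmult_le_reg_r with (sqrt 2); [lra|]. unfold Rdiv.
    rewrite Rmult_assoc, Rinv_l by lra. lra. }
  rewrite Phi_eq_erf by lra. unfold Phi_erf.
  replace (/ sqrt PI * GaussIntegral.gauss_int0 (y / sqrt 2) - 1 / 2)
    with (/ sqrt PI * (GaussIntegral.gauss_int0 (y / sqrt 2) - sqrt PI / 2)) by (field; lra).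
  rewrite Rabs_mult, Rabs_inv, (Rabs_pos_eq (sqrt PI)) by lra.
  apply Rmult_lt_reg_l with (sqrt PI); [lra|].
  rewrite <- Rmult_assoc, Rinv_r by lra.
  specialize (HZ _ HZy). lra.
Qed.

Lemma tail_int_unique f x l1 l2 : is_tail_int f x l1 -> is_tail_int f x l2 -> l1 = l2.
Proof.
  intros H1 H2. apply Rminus_diag_uniq, eq_0_of_abs_lt. intros eta Heta.
  destruct (H1 (eta / 2) ltac:(lra)) as [Y1 HY1].
  destruct (H2 (eta / 2) ltac:(lra)) as [Y2 HY2].
  destruct (HY1 (Rmax Y1 Y2) (Rmax_l _ _)) as [pr1 Hpr1].
  destruct (HY2 (Rmax Y1 Y2) (Rmax_r _ _)) as [pr2 Hpr2].
  rewrite (RiemannInt_P5 pr1 pr2) in Hpr1.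
  replace (l1 - l2) with (- (RiemannInt pr2 - l1) + (RiemannInt pr2 - l2)) by ring.
  eapply Rle_lt_trans; [apply Rabs_triang|]. rewrite Rabs_Ropp. lra.
Qed.

Lemma is_tail_int_gauss x : is_tail_int gauss x (1 / 2 - Phi x).
Proof.
  intros eps Heps. destruct (Phi_cvg_half eps Heps) as [Y HY].
  exists Y. intros y Hy. exists (ex_RInt_Reals_0 _ _ _ (ex_RInt_gauss x y)).
  rewrite <- RInt_Reals, RInt_gauss.
  replace (Phi y - Phi x - (1 / 2 - Phi x)) with (Phi y - 1 / 2) by ring. auto.
Qed.

Lemma Qfun_eq x : Qfun x = 1 / 2 - Phi x.
Proof.
  unfold Qfun. apply (tail_int_unique gauss x).
  - apply epsilon_spec. exists (1 / 2 - Phi x). apply is_tail_int_gauss.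
  - apply is_tail_int_gauss.
Qed.

Lemma Qfun_0 : Qfun 0 = 1 / 2.
Proof. rewrite Qfun_eq, Phi_0. ring. Qed.

Lemma Qfun_antitone x y : x <= y -> Qfun y <= Qfun x.
Proof. intros Hxy. rewrite !Qfun_eq. assert (H := Phi_nondecreasing x y Hxy). lra. Qed.

Lemma Qfun_lt_inv x y : Qfun x < Qfun y -> y < x.
Proof.
  intros H. destruct (Rlt_or_le y x) as [|Hxy]; [assumption|].
  assert (H' := Qfun_antitone x y Hxy). lra.
Qed.

Lemma ln_1p_ge x : 0 <= x -> 2 * x / (2 + x) <= ln (1 + x).
Proof.
  intros Hx. destruct Hx as [Hx|<-].
  2: { rewrite !Rplus_0_r, ln_1. unfold Rdiv. lra. }
  set (g := fun t => ln (1 + t) - 2 * t / (2 + t)).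
  assert (Hd : forall t, 0 < t < x -> is_derive g t (t ^ 2 / ((1 + t) * (2 + t) ^ 2))).
  { intros t Ht. unfold g. auto_derive; [lra|field; lra]. }
  assert (Hc : forall t, 0 <= t <= x -> continuity_pt g t).
  { intros t Ht. apply derivable_continuous_pt, ex_derive_Reals_0.
    unfold g. auto_derive. lra. }
  destruct (MVT_gen g 0 x _ ltac:(rewrite Rmin_left, Rmax_right by lra; exact Hd)
              ltac:(rewrite Rmin_left, Rmax_right by lra; exact Hc)) as [t [Ht Hgt]].
  rewrite Rmin_left, Rmax_right in Ht by lra.
  assert (0 <= t ^ 2 / ((1 + t) * (2 + t) ^ 2) * (x - 0)).
  { apply Rmult_le_pos; [apply Rdiv_le_0_compat; nra|lra]. }
  unfold g in Hgt. rewrite Rplus_0_r, ln_1 in Hgt.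
  replace (2 * 0 / (2 + 0)) with 0 in Hgt by field. lra.
Qed.

Lemma ln_1p_div_sub_ge a p : 0 < a -> 0 < p ->
  p ^ 2 / ((2 * a + p) * (a + p)) <= ln (1 + p / a) - p / (a + p).
Proof.
  intros Ha Hp.
  assert (H := ln_1p_ge (p / a) ltac:(apply Rlt_le, Rdiv_lt_0_compat; lra)).
  replace (2 * (p / a) / (2 + p / a)) with (2 * p / (2 * a + p)) in H by (field; lra).
  replace (p ^ 2 / ((2 * a + p) * (a + p))) with (2 * p / (2 * a + p) - p / (a + p))
    by (field; lra).
  lra.
Qed.

Lemma cap_ddisp_poly_ineq a p u : 0 < a -> 0 < p -> p ^ 2 / ((2 * a + p) * (a + p)) <= u ->
  (u + p / (a + p)) * (p ^ 3 * (p + 3 * a) ^ 2) <= 18 * u ^ 2 * ((p + 2 * a) * (p + a) ^ 4).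
Proof.
  intros Ha Hp Hu.
  set (u0 := p ^ 2 / ((2 * a + p) * (a + p))) in *.
  set (X := (p + 2 * a) * (p + a) ^ 4). set (Y := p ^ 3 * (p + 3 * a) ^ 2).
  assert (Hu0 : 0 < u0) by (unfold u0; apply Rdiv_lt_0_compat; nra).
  assert (HX : 0 < X) by (unfold X; assert (0 < (p + a) ^ 4) by (apply pow_lt; lra); nra).
  (* the inequality holds at [u = u0], and the difference of the two sides grows with [u] *)
  assert (Hat_u0 : (u0 + p / (a + p)) * Y <= 18 * u0 ^ 2 * X).
  { unfold u0, X, Y.
    replace ((p ^ 2 / ((2 * a + p) * (a + p)) + p / (a + p)) * (p ^ 3 * (p + 3 * a) ^ 2))
      with (2 * p ^ 4 * (p + 3 * a) ^ 2 / (p + 2 * a)) by (field; lra).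
    replace (18 * (p ^ 2 / ((2 * a + p) * (a + p))) ^ 2 * ((p + 2 * a) * (p + a) ^ 4))
      with (2 * p ^ 4 * (9 * (p + a) ^ 2) / (p + 2 * a)) by (field; lra).
    apply Rmult_le_compat_r; [left; apply Rinv_0_lt_compat; lra|].
    assert (0 < p ^ 4) by (apply pow_lt; lra).
    apply Rmult_le_compat_l; [lra|]. nra. }
  assert (HY : Y <= 36 * u0 * X).
  { unfold u0, X, Y.
    replace (36 * (p ^ 2 / ((2 * a + p) * (a + p))) * ((p + 2 * a) * (p + a) ^ 4))
      with (p ^ 2 * (36 * (p + a) ^ 3)) by (field; lra).
    replace (p ^ 3 * (p + 3 * a) ^ 2) with (p ^ 2 * (p * (p + 3 * a) ^ 2)) by ring.
    apply Rmult_le_compat_l; [nra|].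
    assert (p * (p + 3 * a) ^ 2 <= 9 * p * (p + a) ^ 2) by nra.
    assert (0 <= p * (p + a) ^ 2) by (apply Rmult_le_pos; [lra|apply pow_le; lra]).
    assert (0 <= a * (p + a) ^ 2) by (apply Rmult_le_pos; [lra|apply pow_le; lra]).
    replace (36 * (p + a) ^ 3) with (36 * (p * (p + a) ^ 2) + 36 * (a * (p + a) ^ 2)) by ring.
    lra. }
  assert (0 <= (u - u0) * (18 * X * (u + u0) - Y)) by (apply Rmult_le_pos; nra).
  replace (18 * u ^ 2 * X) with
    (18 * u0 ^ 2 * X + (u - u0) * (18 * X * (u + u0) - Y) + (u - u0) * Y) by ring.
  nra.
Qed.

Definition capacity (n p : R) : R := n * ln (1 + p).
Definition dispersion (n p : R) : R := n * p * (p + 2) / (p + 1) ^ 2.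

Section FirstBlock.

Variables n0 p : R.
Hypotheses (Hn0 : 0 < n0) (Hp : 0 < p).

Definition cap (a : R) : R := capacity (a * n0) (p / a).
Definition disp (a : R) : R := dispersion (a * n0) (p / a).
Definition dcap (a : R) : R := n0 * (ln (1 + p / a) - p / (a + p)).
Definition ddisp (a : R) : R := n0 * p ^ 2 * (p + 3 * a) / (p + a) ^ 3.

Lemma cap_derive a : 0 < a -> is_derive cap a (dcap a).
Proof.
  intros Ha. unfold cap, capacity, dcap.
  assert (0 < p / a) by (apply Rdiv_lt_0_compat; lra).
  unfold Rdiv in *. auto_derive.
  - repeat split; lra.
  - field. repeat split; lra.
Qed.

Lemma disp_derive a : 0 < a -> is_derive disp a (ddisp a).
Proof.
  intros Ha. unfold disp, dispersion, ddisp.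
  assert (0 < p / a) by (apply Rdiv_lt_0_compat; lra).
  unfold Rdiv in *. auto_derive.
  - repeat split; try lra. apply Rgt_not_eq; nra.
  - field. repeat split; lra.
Qed.

Lemma dcap_pos a : 0 < a -> 0 < dcap a.
Proof.
  intros Ha. unfold dcap. apply Rmult_lt_0_compat; [exact Hn0|].
  apply Rlt_le_trans with (p ^ 2 / ((2 * a + p) * (a + p))); [|apply ln_1p_div_sub_ge; lra].
  apply Rdiv_lt_0_compat; nra.
Qed.

Lemma disp_pos a : 0 < a -> 0 < disp a.
Proof.
  intros Ha. unfold disp, dispersion.
  assert (0 < p / a) by (apply Rdiv_lt_0_compat; lra).
  apply Rdiv_lt_0_compat; [|apply pow_lt; lra].
  assert (0 < a * n0) by nra. assert (0 < a * n0 * (p / a)) by nra. nra.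
Qed.

Lemma ddisp_pos a : 0 < a -> 0 < ddisp a.
Proof.
  intros Ha. unfold ddisp. apply Rdiv_lt_0_compat; [|apply pow_lt; lra].
  assert (0 < n0 * p ^ 2) by (apply Rmult_lt_0_compat; [lra|apply pow_lt; lra]). nra.
Qed.

Lemma cap_ddisp_sq_le a : 0 < a -> cap a * ddisp a ^ 2 <= 18 * dcap a ^ 2 * disp a.
Proof.
  intros Ha. set (L := ln (1 + p / a)).
  assert (H := cap_ddisp_poly_ineq a p (L - p / (a + p)) Ha Hp (ln_1p_div_sub_ge a p Ha Hp)).
  replace (L - p / (a + p) + p / (a + p)) with L in H by ring.
  assert (Hcoef : 0 < n0 ^ 3 * a * p / (p + a) ^ 6).
  { apply Rdiv_lt_0_compat; [|apply pow_lt; lra].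
    assert (0 < n0 ^ 3) by (apply pow_lt; lra).
    apply Rmult_lt_0_compat; [apply Rmult_lt_0_compat|]; lra. }
  replace (18 * dcap a ^ 2 * disp a) with (cap a * ddisp a ^ 2 + n0 ^ 3 * a * p / (p + a) ^ 6 *
    (18 * (L - p / (a + p)) ^ 2 * ((p + 2 * a) * (p + a) ^ 4) - L * (p ^ 3 * (p + 3 * a) ^ 2))).
  - assert (0 <= n0 ^ 3 * a * p / (p + a) ^ 6 *
      (18 * (L - p / (a + p)) ^ 2 * ((p + 2 * a) * (p + a) ^ 4) - L * (p ^ 3 * (p + 3 * a) ^ 2)))
      by (apply Rmult_le_pos; lra).
    lra.
  - unfold cap, capacity, dcap, disp, dispersion, ddisp. fold L. field. lra.
Qed.

End FirstBlock.

(* The sign condition of [dzscore] below: [D] is the margin, [v <= V] the dispersions,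
   [f] the capacity, [Np] and [Vp] the slopes of capacity and dispersion. *)
Lemma half_margin_slope_le D V v f c Np Vp :
  0 < v -> v <= V -> 0 < Np -> 0 < Vp ->
  (0 < D -> D * D < 2 * c / 9 * V) -> c < f -> f * Vp ^ 2 <= 18 * Np ^ 2 * v ->
  D * Vp / 2 <= Np * V.
Proof.
  intros Hv HvV HNp HVp HD Hcf Hf.
  destruct (Rle_or_lt D 0) as [Hneg|Hpos]; [nra|].
  specialize (HD Hpos).
  assert (Hsq : (D * Vp) ^ 2 < (2 * Np * V) ^ 2).
  { apply Rlt_le_trans with (2 * c / 9 * V * Vp ^ 2).
    - replace ((D * Vp) ^ 2) with (D * D * Vp ^ 2) by ring.
      apply Rmult_lt_compat_r; [apply pow_lt|]; lra.
    - assert (0 <= V * Vp ^ 2) by (apply Rmult_le_pos; [lra|apply pow_le; lra]).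
      assert (0 <= Np ^ 2 * V) by (apply Rmult_le_pos; [apply pow_le|]; lra).
      assert (V * (f * Vp ^ 2) <= V * (18 * Np ^ 2 * v)) by (apply Rmult_le_compat_l; lra).
      assert (Np ^ 2 * V * v <= Np ^ 2 * V * V) by (apply Rmult_le_compat_l; lra).
      nra. }
  assert (0 < 2 * Np * V) by nra.
  assert (D * Vp < 2 * Np * V).
  { apply Rsqr_incrst_0; unfold Rsqr; try nra. }
  lra.
Qed.

Section ZScore.

Variables A W c n0 p : R.
Hypotheses (HW : 0 <= W) (Hc : 0 <= c) (Hn0 : 0 < n0) (Hp : 0 < p).

Definition zscore (a : R) : R := (A + cap n0 p a - c) / sqrt (W + disp n0 p a).

Definition dzscore (a : R) : R :=
  (dcap n0 p a * (W + disp n0 p a) - (A + cap n0 p a - c) * ddisp n0 p a / 2) /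
  ((W + disp n0 p a) * sqrt (W + disp n0 p a)).

Lemma zscore_derive a : 0 < a -> is_derive zscore a (dzscore a).
Proof.
  intros Ha. unfold zscore, dzscore.
  assert (HV : 0 < W + disp n0 p a) by (pose proof (disp_pos n0 p Hn0 Hp a Ha); lra).
  assert (HsV : 0 < sqrt (W + disp n0 p a)) by (apply sqrt_lt_R0; lra).
  assert (Hf : is_derive (fun b => A + cap n0 p b - c) a (dcap n0 p a)).
  { replace (dcap n0 p a) with (dcap n0 p a * 1) by ring.
    apply (is_derive_comp (fun y => A + y - c) (cap n0 p)).
    - auto_derive; [easy|ring].
    - apply cap_derive; lra. }
  assert (Hg : is_derive (fun b => sqrt (W + disp n0 p b)) a
                 (ddisp n0 p a / (2 * sqrt (W + disp n0 p a)))).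
  { apply (is_derive_sqrt (fun b => W + disp n0 p b)); [|lra].
    replace (ddisp n0 p a) with (ddisp n0 p a * 1) by ring.
    apply (is_derive_comp (fun y => W + y) (disp n0 p)).
    - auto_derive; [easy|ring].
    - apply disp_derive; lra. }
  assert (H := is_derive_div _ _ _ _ _ Hf Hg ltac:(lra)). cbv beta in H.
  set (s := sqrt (W + disp n0 p a)) in *.
  assert (Hss : s * s = W + disp n0 p a) by (apply sqrt_sqrt; lra).
  set (V := W + disp n0 p a) in *.
  rewrite <- Hss. replace (_ / (s * s * s)) with
    ((dcap n0 p a * s - (A + cap n0 p a - c) * (ddisp n0 p a / (2 * s))) / s ^ 2)
    by (field; lra).
  exact H.
Qed.

Lemma dzscore_nonneg a : 0 < a -> zscore a < sqrt (2 * c) / 3 -> c < cap n0 p a ->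
  0 <= dzscore a.
Proof.
  intros Ha Hz Hcap. unfold zscore, dzscore in *.
  assert (Hv := disp_pos n0 p Hn0 Hp a Ha).
  set (V := W + disp n0 p a) in *. set (D := A + cap n0 p a - c) in *.
  assert (HV : 0 < V) by (unfold V; lra).
  assert (HsV : 0 < sqrt V) by (apply sqrt_lt_R0; lra).
  apply Rdiv_le_0_compat; [|apply Rmult_lt_0_compat; lra].
  cut (D * ddisp n0 p a / 2 <= dcap n0 p a * V); [lra|].
  apply (half_margin_slope_le D V (disp n0 p a) (cap n0 p a) c).
  - exact Hv.
  - unfold V; lra.
  - apply dcap_pos; lra.
  - apply ddisp_pos; lra.
  - intros HD.
    assert (HDs : D < sqrt (2 * c) / 3 * sqrt V).
    { replace D with (D / sqrt V * sqrt V) by (field; lra).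
      apply Rmult_lt_compat_r; lra. }
    assert (H2c : sqrt (2 * c) * sqrt (2 * c) = 2 * c) by (apply sqrt_sqrt; lra).
    assert (HVV : sqrt V * sqrt V = V) by (apply sqrt_sqrt; lra).
    assert (Hsq : (sqrt (2 * c) / 3 * sqrt V) * (sqrt (2 * c) / 3 * sqrt V) = 2 * c / 9 * V).
    { transitivity (sqrt (2 * c) * sqrt (2 * c) * (sqrt V * sqrt V) / 9); [field|].
      rewrite H2c, HVV. field. }
    rewrite <- Hsq. nra.
  - exact Hcap.
  - apply cap_ddisp_sq_le; lra.
Qed.

Lemma zscore_pos_lt a : 0 < a -> 0 < zscore a -> c < A + cap n0 p a.
Proof.
  intros Ha Hz. unfold zscore in Hz.
  assert (Hs : 0 < sqrt (W + disp n0 p a)).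
  { apply sqrt_lt_R0. assert (H := disp_pos n0 p Hn0 Hp a Ha). lra. }
  assert (H := Rmult_lt_0_compat _ _ Hz Hs).
  unfold Rdiv in H. rewrite Rmult_assoc, Rinv_l, Rmult_1_r in H by lra. lra.
Qed.

Lemma zscore_nondecreasing a1 a2 : 0 < a1 -> a1 <= a2 ->
  (forall a, a1 <= a <= a2 -> zscore a < sqrt (2 * c) / 3 /\ c < cap n0 p a) ->
  zscore a1 <= zscore a2.
Proof.
  intros Ha1 H12 Hab.
  destruct (MVT_gen zscore a1 a2 dzscore) as [t [Ht Hmvt]];
    rewrite ?Rmin_left, ?Rmax_right in * by lra.
  - intros t Ht. apply zscore_derive; lra.
  - intros t Ht. apply derivable_continuous_pt, ex_derive_Reals_0.
    exists (dzscore t). apply zscore_derive; lra.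
  - destruct (Hab t Ht) as [Hz Hcap].
    assert (0 <= dzscore t * (a2 - a1)).
    { apply Rmult_le_pos; [apply dzscore_nonneg|]; lra. }
    lra.
Qed.

End ZScore.

Lemma sumR_succ_l m f : sumR (S m) f = f 0%nat + sumR m (fun i => f (S i)).
Proof. induction m as [|m IH]; simpl in *; [ring|rewrite IH; ring]. Qed.

Lemma sumR_nonneg m f : (forall i, (i < m)%nat -> 0 <= f i) -> 0 <= sumR m f.
Proof.
  induction m as [|m IH]; intros Hf; simpl; [lra|].
  assert (0 <= f m) by (apply Hf; lia).
  assert (0 <= sumR m f) by (apply IH; intros; apply Hf; lia). lra.
Qed.

Lemma epsm_scale B m n P a :
  epsm B (S m) (scaleN a n) (scaleP a P) =
  Qfun (zscore (sumR m (fun i => capacity (n (S i)) (P (S i))))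
               (sumR m (fun i => dispersion (n (S i)) (P (S i))))
               (B * ln 2) (n 0%nat) (P 0%nat) a).
Proof.
  unfold epsm, zscore, cap, disp. rewrite !sumR_succ_l. cbn [scaleN scaleP Nat.eqb].
  unfold capacity, dispersion. f_equal. f_equal; [ring|f_equal; ring].
Qed.

Lemma epsm_scale_antitone B m n P a1 a2 : 0 < B -> (1 <= m)%nat ->
  (forall i, (i < m)%nat -> 0 < n i /\ 0 < P i) -> 0 < a1 -> a1 <= a2 ->
  (forall a, a1 <= a <= a2 ->
     epsm B 1 (scaleN a n) (scaleP a P) < 1 / 2 /\
     Qfun (sqrt (2 * B * ln 2) / 3) < epsm B m (scaleN a n) (scaleP a P)) ->
  epsm B m (scaleN a2 n) (scaleP a2 P) <= epsm B m (scaleN a1 n) (scaleP a1 P).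
Proof.
  intros HB Hm Hpos Ha1 H12 Hab.
  destruct m as [|m]; [lia|].
  destruct (Hpos 0%nat ltac:(lia)) as [Hn0 Hp0].
  assert (Hc : 0 < B * ln 2).
  { apply Rmult_lt_0_compat; [lra|]. rewrite <- ln_1. apply ln_increasing; lra. }
  rewrite !epsm_scale. apply Qfun_antitone, zscore_nondecreasing; try lra.
  - apply sumR_nonneg. intros i Hi. destruct (Hpos (S i) ltac:(lia)) as [Hni HPi].
    unfold dispersion. apply Rdiv_le_0_compat; [|apply pow_lt; lra].
    apply Rmult_le_pos; [|lra]. apply Rmult_le_pos; lra.
  - intros a Ha. destruct (Hab a Ha) as [H1 HM].
    rewrite !epsm_scale in H1, HM. split.
    + apply Qfun_lt_inv. replace (2 * (B * ln 2)) with (2 * B * ln 2) by ring. exact HM.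
    + rewrite <- Qfun_0 in H1. apply Qfun_lt_inv, zscore_pos_lt in H1; simpl in *; lra.
Qed.

Theorem lemma3 (B : R) (HB : 0 < B) (M : nat) (HM : (2 <= M)%nat)
  (n P : nat -> R) (Hpos : forall i, (i < M)%nat -> 0 < n i /\ 0 < P i)
  (a1 a2 : R) (Ha1 : 0 < a1) (Ha12 : a1 <= a2)
  (Hin : forall a, a1 <= a <= a2 -> inBset B M (scaleN a n) (scaleP a P)) :
  epsm B 1 (scaleN a2 n) (scaleP a2 P) <= epsm B 1 (scaleN a1 n) (scaleP a1 P) /\
  epsm B M (scaleN a2 n) (scaleP a2 P) <= epsm B M (scaleN a1 n) (scaleP a1 P).
Proof.
  split; apply epsm_scale_antitone; try lia; try lra.
  - intros i Hi. apply Hpos. lia.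
  - intros a Ha. destruct (Hin a Ha) as (_ & ? & ? & ?). split; lra.
  - exact Hpos.
  - intros a Ha. destruct (Hin a Ha) as (_ & ? & ? & ?). split; lra.
Qed.
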